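(* Let $G$ be a finite simple graph with a normal spanning tree $T$ rooted at $r$ such that $G$ has no secant edges with respect to $T$, and suppose $T$ is a whip. Then $G$ has a proper $3$-coloring in which all leaves of $T$ (vertices of $T$ having no children) receive the same color.
   Context: For a tree $T$ rooted at $r$, write $y\le_T x$ if $y$ lies on the $rx$-path of $T$; the children (successors) of $x$ are its neighbors $z$ with $x\le_T z$. $T$ is normal in $G$ if for every edge $xy$ of $G$, $x\le_T y$ or $y\le_T x$. Two edges $e,e'$ of $G$ are secant with respect to $T$ if there is a path $P=x_1\dots x_n$ in $T$ with $x_1=r$ containing the ends of $e,e'$ such that, with respect to the enumeration $x_1\dots x_n$, both are jumps (an edge $x_ix_j$ with $|i-j|>1$) and, writing them $x_lx_m$, $x_px_q$ with $l<m$, $p<q$, we have $l<p<m<q$ or $p<l<q<m$. A star$^0$-like tree is a tree having exactly one vertex of degree strictly greater than $2$, called its node. A whip is a rooted star$^0$-like tree in which every child of its node is a leaf. *)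

From mathcomp Require Import all_boot.
Set Implicit Arguments. Unset Strict Implicit. Unset Printing Implicit Defensive.

Definition simple_graph (V : finType) (e : rel V) : Prop :=
  symmetric e /\ irreflexive e.

(* A rooted tree on V with root r, encoded by its parent function par:
   par r = r, and iterating par from any vertex reaches r.
   Tree edges are {x, par x} for x <> r. *)
Definition rooted_tree (V : finType) (par : V -> V) (r : V) : Prop :=
  par r = r /\ forall x : V, exists n : nat, iter n par x = r.

Definition tadj (V : finType) (par : V -> V) (r : V) (x y : V) : bool :=
  ((x != r) && (par x == y)) || ((y != r) && (par y == x)).

(* T is a spanning tree of G: every tree edge is an edge of G
   (all vertices of V are vertices of T). *)
Definition spanning_tree_of (V : finType) (e : rel V) (par : V -> V) (r : V) : Prop :=
  rooted_tree par r /\ forall x : V, tadj par r x (par x) -> e x (par x).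

(* y <=_T x : y lies on the r-x path of T (the path x, par x, ..., r). *)
Definition tle (V : finType) (par : V -> V) (y x : V) : Prop :=
  exists n : nat, iter n par x = y.

Definition normal_tree (V : finType) (e : rel V) (par : V -> V) : Prop :=
  forall x y : V, e x y -> tle par x y \/ tle par y x.

Definition tpath (V : finType) (par : V -> V) (r : V) (s : seq V) : Prop :=
  uniq s /\ forall i : nat, i.+1 < size s -> tadj par r (nth r s i) (nth r s i.+1).

(* G has two secant edges with respect to T: there is a path P = x_1 ... x_n
   in T with x_1 = r (0-indexed here) and two jumps x_l x_m, x_p x_q of G
   (l < m, p < q) with l < p < m < q or p < l < q < m. *)
Definition has_secant_edges (V : finType) (e : rel V) (par : V -> V) (r : V) : Prop :=
  exists (s : seq V) (l m p q : nat),
    [/\ tpath par r s /\ head r s = r /\ 0 < size s,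
        [/\ l < m, m < size s, l.+1 < m & e (nth r s l) (nth r s m)],
        [/\ p < q, q < size s, p.+1 < q & e (nth r s p) (nth r s q)] &
        ((l < p < m) && (m < q)) || ((p < l < q) && (q < m))].

Definition tdeg (V : finType) (par : V -> V) (r : V) (x : V) : nat :=
  #|[set z | tadj par r x z]|.

Definition tchild (V : finType) (par : V -> V) (r : V) (x z : V) : Prop :=
  tadj par r x z /\ tle par x z.

Definition tleaf (V : finType) (par : V -> V) (r : V) (x : V) : Prop :=
  forall z : V, ~ tchild par r x z.

Definition whip (V : finType) (par : V -> V) (r : V) : Prop :=
  exists v : V,
    [/\ 2 < tdeg par r v,
        (forall w : V, 2 < tdeg par r w -> w = v) &
        (forall z : V, tchild par r v z -> tleaf par r z)].

Definition proper_coloring (V : finType) (e : rel V) (k : nat) (c : V -> 'I_k) : Prop :=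
  forall x y : V, e x y -> c x != c y.

From mathcomp Require Import all_boot zify.
Set Implicit Arguments. Unset Strict Implicit. Unset Printing Implicit Defensive.

(* Normality makes every edge of G join a vertex to one of its T-ancestors. In a whip with
   node v, every vertex that is neither on the root path r..v (the spine) nor a child of v
   lies on one further path r..y hanging from the root, since only v has degree > 2, and the
   children of v are leaves. Merging the children of v into one extra vertex after v, the
   spine and that branch become paths whose G-edges pairwise do not cross, as two crossing
   edges would be secant. A path with pairwise non-crossing chords is properly 3-colourable
   with prescribed colours at its ends (distinct if the ends are adjacent): cut at the farthest
   neighbour m of the first vertex, which no edge passes over except one between the ends,
   and colour both halves recursively with the third colour at m. Colour the spine and the
   branch in this way, with r coloured 0 and the far ends, which are exactly the leaves of T,
   coloured 2. *)

Section NoncrossingColoring.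
Variable E : nat -> nat -> bool.

Definition noncrossing (a b : nat) := forall i j p q,
  a <= i -> i < p -> p < j -> j < q -> q <= b -> E i j -> E p q -> False.

Definition proper_on (a b : nat) (c : nat -> 'I_3) :=
  forall i j, a <= i -> i < j -> j <= b -> E i j -> c i != c j.

Lemma noncrossing_sub a b a' b' :
  a <= a' -> b' <= b -> noncrossing a b -> noncrossing a' b'.
Proof. by move=> aa' b'b nc i j p q *; apply: (nc i j p q) => //; lia. Qed.

Lemma third_color (c1 c2 : 'I_3) : exists c : 'I_3, (c != c1) && (c != c2).
Proof.
case: c1 c2 => [[|[|[|//]]] ?] [[|[|[|//]]] ?].
all: first [by exists ord0 | by exists (@Ordinal 3 1 isT) | by exists ord_max].
Qed.

Lemma proper_on_glue a m b c1 c2 :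
  c1 m = c2 m -> proper_on a m c1 -> proper_on m b c2 ->
  (forall i j, a <= i < m -> m < j <= b -> E i j -> c1 i != c2 j) ->
  proper_on a b (fun i => if i <= m then c1 i else c2 i).
Proof.
move=> c12 c1_proper c2_proper c_across i j ai ij jb.
have [jm | mj] := leqP j m; first by rewrite (leq_trans (ltnW ij) jm); apply: c1_proper.
have [im | mi] := ltnP i m; first by rewrite ltnW //; apply: c_across; lia.
have -> : (if i <= m then c1 i else c2 i) = c2 i.
  by case: leqP => // im'; have -> : i = m by lia.
exact: c2_proper.
Qed.

Lemma noncrossing_jump_over a m b :
  noncrossing a b -> a < m < b -> (m == a.+1) || E a m ->
  (forall j, m < j < b -> ~~ E a j) ->
  forall i j, a <= i < m -> m < j <= b -> E i j -> i = a /\ j = b.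
Proof.
move=> nc /andP[am mb] m_jump m_max i j /andP[ai im] /andP[mj jb] Eij.
have ia : i = a.
  apply/eqP; rewrite eqn_leq ai andbT leqNgt; apply/negP => lt_ai.
  case/orP: m_jump => [/eqP ma | Eam]; first lia.
  exact: (nc a m i j).
split=> //; apply/eqP; rewrite eqn_leq jb leqNgt; apply/negP => jb'.
by move: Eij; rewrite ia; apply/negP/m_max; rewrite mj.
Qed.

Lemma noncrossing_3coloring a b (ca cb : 'I_3) :
  a <= b -> noncrossing a b -> (a = b -> ca = cb) -> (E a b -> ca != cb) ->
  exists c, [/\ c a = ca, c b = cb & proper_on a b c].
Proof.
have [n] := ubnP (b - a); elim: n a b ca cb => // n IH a b ca cb lt_n ab nc ca_cb Eab.
have [le_ba1 | lt_a1b] := leqP b a.+1.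
  exists (fun i => if i <= a then ca else cb); rewrite leqnn; split=> //.
    by case: ifP => // ba; apply: ca_cb; lia.
  move=> i j ai ij jb; have eb : b = a.+1 by lia.
  have [-> ->] : i = a /\ j = a.+1 by lia.
  by rewrite leqnn ltnn -eb.
pose P j := (a < j < b) && ((j == a.+1) || E a j).
have P_a1 : P a.+1 by rewrite /P eqxx ltnSn lt_a1b.
have P_le_b j : P j -> j <= b by case/andP=> /andP[_ /ltnW].
have [m /andP[amb m_jump] m_max] := ex_maxnP (ex_intro P _ P_a1) P_le_b.
have [g /andP[g_ca g_cb]] := third_color ca cb.
have [c1 [c1a c1m c1_proper]] : exists c, [/\ c a = ca, c m = g & proper_on a m c].
  apply: (IH); rewrite 1?eq_sym //; try lia.
  by apply: noncrossing_sub nc; lia.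
have [c2 [c2m c2b c2_proper]] : exists c, [/\ c m = g, c b = cb & proper_on m b c].
  apply: (IH) => //; try lia.
  by apply: noncrossing_sub nc; lia.
exists (fun i => if i <= m then c1 i else c2 i); split.
- by rewrite ifT //; lia.
- by rewrite ifF //; lia.
apply: proper_on_glue => // [|i j im mj Eij]; first by rewrite c1m c2m.
have m_last k : m < k < b -> ~~ E a k.
  by move=> mkb; apply/negP => Eak; have := m_max k; rewrite /P Eak orbT; lia.
have [ia jb] := noncrossing_jump_over nc amb m_jump m_last im mj Eij.
by subst i j; rewrite c1a c2b; apply: Eab.
Qed.

End NoncrossingColoring.

Section RootedTree.
Variables (V : finType) (par : V -> V) (r : V).
Hypothesis tree : rooted_tree par r.

Lemma reaches_root x : exists n, iter n par x == r.
Proof. by have [n /eqP] := tree.2 x; exists n. Qed.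

Definition depth x := ex_minn (reaches_root x).

Lemma iter_depth x : iter (depth x) par x = r.
Proof. by rewrite /depth; case: ex_minnP => n /eqP. Qed.

Lemma depth_min x n : iter n par x = r -> depth x <= n.
Proof. by rewrite /depth; case: ex_minnP => m _ min_m /eqP; apply: min_m. Qed.

Lemma iter_par_root n : iter n par r = r.
Proof. by elim: n => //= n ->; exact: tree.1. Qed.

Lemma iter_depth_le x n : depth x <= n -> iter n par x = r.
Proof. by move=> le_dn; rewrite -(subnK le_dn) iterD iter_depth iter_par_root. Qed.

Lemma iter_lt_depth x n : n < depth x -> iter n par x != r.
Proof. by move=> lt_nd; apply/eqP => /depth_min; rewrite leqNgt lt_nd. Qed.

Lemma iter_cycle_root x p : 0 < p -> iter p par x = x -> x = r.
Proof.
move=> p_gt0 px; have iter_mul t : iter (p * t) par x = x.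
  by elim: t => [|t IH]; rewrite ?muln0 // mulnS iterD IH px.
by rewrite -[x](iter_mul (depth x)) iter_depth_le // leq_pmull.
Qed.

Lemma par_par_neq x : x != r -> par (par x) != x.
Proof. by apply: contraNneq => /(iter_cycle_root (p := 2)) ->. Qed.

Lemma depth_eq0 x : (depth x == 0) = (x == r).
Proof.
apply/eqP/eqP => [d0 | ->]; first by rewrite -(iter_depth x) d0.
by apply/eqP; rewrite -leqn0 depth_min.
Qed.

Lemma depth_root : depth r = 0.
Proof. by apply/eqP; rewrite depth_eq0. Qed.

Lemma depth_par x : x != r -> depth x = (depth (par x)).+1.
Proof.
move=> xr; apply/eqP; rewrite eqn_leq depth_min; last by rewrite iterSr iter_depth.
have : depth x != 0 by rewrite depth_eq0.
by case: (depth x) (iter_depth x) => // d dx _; rewrite ltnS depth_min // -iterSr.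
Qed.

Lemma depth_iter x i : i <= depth x -> depth (iter i par x) = depth x - i.
Proof.
elim: i => [|i IH] le_id; first by rewrite subn0.
by have := depth_par (iter_lt_depth le_id); rewrite iterS (IH (ltnW le_id)); lia.
Qed.

Lemma tle_trans x y z : tle par x y -> tle par y z -> tle par x z.
Proof. by move=> [m <-] [n <-]; exists (m + n); rewrite iterD. Qed.

Lemma tle_par x y : tle par x y -> x != y -> tle par x (par y).
Proof. by move=> [[|n] <-]; rewrite ?eqxx // => _; exists n; rewrite iterSr. Qed.

Lemma tadj_child w : w != r -> tadj par r (par w) w.
Proof. by move=> wr; rewrite /tadj wr eqxx orbT. Qed.

Lemma tadj_par w : w != r -> tadj par r w (par w).
Proof. by move=> wr; rewrite /tadj wr eqxx. Qed.

Lemma tchild_par w : w != r -> tchild par r (par w) w.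
Proof. by move=> wr; split; [apply: tadj_child | exists 1]. Qed.

Lemma tle_child u x : tle par u x -> u != x ->
  exists w, [/\ tle par w x, w != r & par w = u].
Proof.
case=> n; elim: n x => [|n IH] x; first by move=> /= ->; rewrite eqxx.
rewrite iterSr => ux neq_ux; have [pxu | upx] := eqVneq u (par x); last first.
  have [w [wpx wr wu]] := IH _ ux upx.
  by exists w; split=> //; apply: tle_trans wpx _; exists 1.
exists x; split=> //; first by exists 0.
by apply: contra_neq neq_ux => xr; rewrite pxu xr tree.1.
Qed.

Lemma tleaf_tle u x : tleaf par r u -> tle par u x -> x = u.
Proof.
move=> u_leaf ux; have [// | neq_ux] := eqVneq u x.
have [w [_ wr wu]] := tle_child ux neq_ux.
by case: (u_leaf w); rewrite -wu; apply: tchild_par.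
Qed.

Definition root_path x := rev (traject par x (depth x).+1).

Lemma size_root_path x : size (root_path x) = (depth x).+1.
Proof. by rewrite size_rev size_traject. Qed.

Lemma root_path_par x : x != r -> root_path x = rcons (root_path (par x)) x.
Proof. by move=> xr; rewrite /root_path (depth_par xr) trajectS rev_cons. Qed.

Lemma nth_root_path x i : i <= depth x ->
  nth r (root_path x) i = iter (depth x - i) par x.
Proof.
move=> le_id; rewrite nth_rev size_traject ?ltnS // subSS.
by rewrite (set_nth_default x) ?size_traject ?nth_traject //; lia.
Qed.

Lemma root_pathP y x : reflect (tle par y x) (y \in root_path x).
Proof.
rewrite mem_rev; apply: (iffP trajectP) => [[n _ ->] | [n <-]]; first by exists n.
have [le_nd | lt_dn] := leqP n (depth x); first by exists n.
by exists (depth x) => //; rewrite iter_depth iter_depth_le // ltnW.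
Qed.

Lemma root_in_root_path x : r \in root_path x.
Proof. by apply/root_pathP; exists (depth x); rewrite iter_depth. Qed.

Lemma self_in_root_path x : x \in root_path x.
Proof. by apply/root_pathP; exists 0. Qed.

Lemma mem_root_path_tle x y z : tle par x y -> y \in root_path z -> x \in root_path z.
Proof. by move=> xy /root_pathP yz; apply/root_pathP; apply: tle_trans xy yz. Qed.

Lemma uniq_root_path x : uniq (root_path x).
Proof.
rewrite rev_uniq looping_uniq /looping iter_depth.
by apply/trajectP => -[n /iter_lt_depth/eqP nr rn]; apply: nr; rewrite rn.
Qed.

Lemma index_root_path_root x : index r (root_path x) = 0.
Proof.
rewrite -[r in index r](iter_depth x) -(subn0 (depth x)) -nth_root_path //.
by rewrite index_uniq ?size_root_path ?uniq_root_path.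
Qed.

Lemma index_root_path_self x : index x (root_path x) = depth x.
Proof.
rewrite -[x in index x]/(iter 0 par x) -(subnn (depth x)) -nth_root_path //.
by rewrite index_uniq ?size_root_path ?uniq_root_path.
Qed.

Lemma tpath_root_path x : tpath par r (root_path x).
Proof.
split=> [|i]; first exact: uniq_root_path.
rewrite size_root_path ltnS => lt_id.
rewrite !nth_root_path ?(ltnW lt_id) // -(subnSK lt_id) iterS.
by apply: tadj_child; apply: iter_lt_depth; lia.
Qed.

Lemma head_root_path x : head r (root_path x) = r.
Proof. by rewrite -nth0 nth_root_path // subn0 iter_depth. Qed.

Variable e : rel V.
Hypotheses (e_sym : symmetric e) (e_irr : irreflexive e).
Hypotheses (e_normal : normal_tree e par) (no_secant : ~ has_secant_edges e par r).

Lemma proper_coloring_tle (c : V -> 'I_3) :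
  (forall x y, tle par x y -> e x y -> c x != c y) -> proper_coloring e c.
Proof.
move=> c_tle x y exy; have [xy | yx] := e_normal exy; first exact: c_tle.
by rewrite eq_sym c_tle // e_sym.
Qed.

Definition seq_rel (s : seq V) i j := e (nth r s i) (nth r s j).

Lemma seq_rel_rcons s z i j :
  i < size s -> j < size s -> seq_rel (rcons s z) i j = seq_rel s i j.
Proof. by move=> i_lt j_lt; rewrite /seq_rel !nth_rcons i_lt j_lt. Qed.

Lemma noncrossing_root_path x : noncrossing (seq_rel (root_path x)) 0 (depth x).
Proof.
move=> i j p q _ ip pj jq qd eij epq; apply: no_secant.
exists (root_path x), i, j, p, q; rewrite size_root_path head_root_path ip pj jq.
split=> //; first by split; [exact: tpath_root_path | split].
- by split=> //; lia.
- by split=> //; lia.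
Qed.

Lemma proper_on_index (s : seq V) (E : nat -> nat -> bool) b (col : nat -> 'I_3) :
  uniq s -> size s <= b.+1 ->
  (forall i j, i < j < size s -> seq_rel s i j -> E i j) -> proper_on E 0 b col ->
  {in s &, forall x y, e x y -> col (index x s) != col (index y s)}.
Proof.
move=> s_uniq s_size s_E col_proper x y xs ys.
wlog lt_xy : x y xs ys / index x s < index y s.
  move=> lt_case exy; case: (ltngtP (index x s) (index y s)) => [|gt|eq].
  - by move/lt_case; apply.
  - by rewrite eq_sym lt_case // e_sym.
  - by move: exy; rewrite -(nth_index r xs) -(nth_index r ys) eq e_irr.
move=> exy; have ys_lt : index y s < size s by rewrite index_mem.
apply: col_proper => //; first lia.
by apply: s_E; [rewrite lt_xy | rewrite /seq_rel !nth_index].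
Qed.

Section Whip.
Variable v : V.
Hypotheses (v_deg : 2 < tdeg par r v) (v_unique : forall w, 2 < tdeg par r w -> w = v).
Hypothesis v_children_leaves : forall z, tchild par r v z -> tleaf par r z.

Definition node_child z := (z != r) && (par z == v).
Local Notation spine := (root_path v).
Definition off_spine x := (x \notin spine) && ~~ node_child x.

Lemma three_neighbors_node u a b c : a != b -> a != c -> b != c ->
  tadj par r u a -> tadj par r u b -> tadj par r u c -> u = v.
Proof.
move=> ab ac bc ua ub uc; apply: v_unique; rewrite /tdeg.
have abc_sub : [set a; b; c] \subset [set z | tadj par r u z].
  by apply/subsetP => z; rewrite !inE => /orP[/orP[]|] /eqP ->.
apply: leq_trans (subset_leq_card abc_sub).
by rewrite -setUA cardsU1 cards2 !inE negb_or ab ac bc.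
Qed.

Lemma node_child_exists : exists z, node_child z.
Proof.
apply/existsP; apply: contraLR v_deg => /existsPn no_child; rewrite -leqNgt /tdeg.
have : [set z | tadj par r v z] \subset [set par v].
  apply/subsetP => z; rewrite !inE /tadj.
  by move: (no_child z); rewrite /node_child => /negbTE ->; rewrite orbF => /andP[_ /eqP ->].
by move/subset_leq_card; rewrite cards1 => /leq_trans; apply.
Qed.

Lemma node_child_tchild z : node_child z -> tchild par r v z.
Proof. by case/andP => zr /eqP <-; apply: tchild_par. Qed.

Lemma depth_node_child z : node_child z -> depth z = (depth v).+1.
Proof. by case/andP => zr /eqP zv; rewrite depth_par // zv. Qed.

Lemma root_path_node_child z : node_child z -> root_path z = rcons spine z.
Proof. by case/andP => zr /eqP zv; rewrite root_path_par // zv. Qed.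

Lemma node_child_notin_spine z : node_child z -> z \notin spine.
Proof.
case/andP => zr /eqP zv; apply: contra zr => /root_pathP [n vz].
by apply/eqP/(iter_cycle_root (p := n.+1)); rewrite // iterSr zv.
Qed.

Lemma leaf_notin_spine x : tleaf par r x -> x \notin spine.
Proof.
move=> x_leaf; apply/negP => /root_pathP /(tleaf_tle x_leaf) vx.
by have [z /node_child_tchild] := node_child_exists; rewrite vx; apply: x_leaf.
Qed.

Lemma spine_succ u : u \in spine -> u != v ->
  exists w, [/\ w \in spine, w != r & par w = u].
Proof.
move=> /root_pathP uv /(tle_child uv) [w [wv wr wu]].
by exists w; split=> //; apply/root_pathP.
Qed.

Lemma off_spine_neq_root x : off_spine x -> x != r.
Proof. by case/andP => + _; apply: contraNneq => ->; apply: root_in_root_path. Qed.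

Lemma off_spine_par x : off_spine x -> par x != r -> off_spine (par x).
Proof.
move=> x_off pxr; have xr := off_spine_neq_root x_off.
case/andP: x_off => x_spine x_child.
have pxv : par x != v by apply: contra x_child => pxv; rewrite /node_child xr.
apply/andP; split.
  apply/negP => px_spine; have [w [w_spine wr wpx]] := spine_succ px_spine pxv.
  move/negP: pxv; apply; apply/eqP.
  apply: (three_neighbors_node (a := x) (b := w) (c := par (par x))).
  - by apply: contraNneq x_spine => ->.
  - by rewrite eq_sym par_par_neq.
  - by rewrite -wpx eq_sym par_par_neq.
  - exact: tadj_child.
  - by rewrite -wpx tadj_child.
  - exact: tadj_par.
apply/negP => /node_child_tchild /v_children_leaves px_leaf.
exact: px_leaf x (tchild_par xr).
Qed.

Lemma off_spine_siblings u x x' : (u == r) || off_spine u ->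
  off_spine x -> off_spine x' -> par x = u -> par x' = u -> x = x'.
Proof.
move=> u_ok x_off x'_off pxu px'u; apply/eqP/negPn/negP => neq_xx'.
have [xr x'r] := (off_spine_neq_root x_off, off_spine_neq_root x'_off).
have uv : u != v.
  by apply: contraTneq x_off => uv; rewrite /off_spine /node_child xr pxu uv eqxx andbF.
have [t [ut tx tx']] : exists t, [/\ tadj par r u t, t != x & t != x'].
  case/orP: u_ok => [/eqP ur | u_off].
    have [|w [w_spine wr wu]] := spine_succ (root_in_root_path v); first by rewrite -ur.
    exists w; split; first by rewrite ur -{2}wu tadj_child.
      by apply: contraTneq x_off => <-; rewrite /off_spine w_spine.
    by apply: contraTneq x'_off => <-; rewrite /off_spine w_spine.
  exists (par u); split; first by apply: tadj_par; apply: off_spine_neq_root.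
    by rewrite -pxu par_par_neq.
  by rewrite -px'u par_par_neq.
move/negP: uv; apply; apply/eqP.
apply: (three_neighbors_node (a := x) (b := x') (c := t)) => //.
- by rewrite eq_sym.
- by rewrite eq_sym.
- by rewrite -pxu tadj_child.
- by rewrite -px'u tadj_child.
Qed.

Lemma off_spine_depth_inj x x' :
  off_spine x -> off_spine x' -> depth x = depth x' -> x = x'.
Proof.
have [n] := ubnP (depth x); elim: n x x' => // n IH x x' lt_xn x_off x'_off dxx'.
have [xr x'r] := (off_spine_neq_root x_off, off_spine_neq_root x'_off).
have dpar : depth (par x) = depth (par x') by apply: succn_inj; rewrite -!depth_par.
have [pxr | pxr] := eqVneq (par x) r.
  have px'r : par x' = r by apply/eqP; rewrite -depth_eq0 -dpar pxr depth_root.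
  by apply: (off_spine_siblings _ x_off x'_off pxr px'r); rewrite eqxx.
have px'r : par x' != r by rewrite -depth_eq0 -dpar depth_eq0.
have px_off := off_spine_par x_off pxr.
have epar : par x = par x'.
  by apply: IH px_off (off_spine_par x'_off px'r) dpar; rewrite depth_par in lt_xn.
by apply: (off_spine_siblings _ x_off x'_off erefl (esym epar)); rewrite px_off orbT.
Qed.

Lemma off_spine_iter y i : off_spine y -> iter i par y != r -> off_spine (iter i par y).
Proof.
move=> y_off; elim: i => // i IH; rewrite iterS => pir.
by apply: (off_spine_par _ pir); apply: IH; apply: contraNneq pir => ->; rewrite tree.1.
Qed.

(* [r] when every vertex is on the spine or a child of [v]. *)
Definition branch_end := [arg max_(y > r | (y == r) || off_spine y) depth y].
Local Notation branch := (root_path branch_end).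

Lemma branch_end_off_spine : branch_end != r -> off_spine branch_end.
Proof.
rewrite /branch_end; case: arg_maxnP; first by rewrite eqxx.
by move=> y /orP[/eqP -> | y_off] _; rewrite ?eqxx.
Qed.

Lemma off_spine_tle_branch_end x : off_spine x -> tle par x branch_end.
Proof.
move=> x_off; have x_pos : 0 < depth x by rewrite lt0n depth_eq0 off_spine_neq_root.
have le_xy : depth x <= depth branch_end.
  by rewrite /branch_end; case: arg_maxnP; rewrite ?eqxx // => y _; apply; rewrite x_off orbT.
have y_off : off_spine branch_end.
  by apply: branch_end_off_spine; rewrite -depth_eq0 -lt0n (leq_trans x_pos).
set a := iter (depth branch_end - depth x) par branch_end.
have da : depth a = depth x by rewrite depth_iter ?leq_subr // subKn.
have ar : a != r by rewrite -depth_eq0 da -lt0n.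
exists (depth branch_end - depth x).
exact: off_spine_depth_inj (off_spine_iter y_off ar) x_off da.
Qed.

Lemma branch_off_spine x : x \in branch -> x != r -> off_spine x.
Proof.
move=> /root_pathP [n <-] xr; have [yr | yr] := eqVneq branch_end r.
  by move: xr; rewrite yr iter_par_root eqxx.
exact: off_spine_iter (branch_end_off_spine yr) xr.
Qed.

(* Index [(depth v).+1] stands for all children of [v] at once; by normality their only
   neighbours are on the spine. *)
Definition spine_rel i j := [exists z, node_child z && seq_rel (root_path z) i j].

Lemma noncrossing_spine_rel : noncrossing spine_rel 0 (depth v).+1.
Proof.
move=> i j p q _ ip pj jq qd.
move=> /existsP[z1 /andP[z1_child eij]] /existsP[z2 /andP[z2_child epq]].
apply: (noncrossing_root_path (leq0n i) ip pj jq _ _ epq); first by rewrite depth_node_child.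
move: eij; rewrite (root_path_node_child z1_child) (root_path_node_child z2_child).
by rewrite !seq_rel_rcons // size_root_path; lia.
Qed.

Lemma spine_coloring : exists cs : nat -> 'I_3, [/\ cs 0 = ord0,
  {in spine &, forall x y, e x y -> cs (index x spine) != cs (index y spine)} &
  forall x z, x \in spine -> node_child z -> e x z -> cs (index x spine) != ord_max].
Proof.
have [//|//|cs [cs0 cs_end cs_proper]] :=
  @noncrossing_3coloring spine_rel 0 (depth v).+1 ord0 ord_max isT noncrossing_spine_rel.
exists cs; split=> // [x y xs ys | x z xs z_child exz].
  apply: (proper_on_index (uniq_root_path v) _ _ cs_proper xs ys).
    by rewrite size_root_path.
  move=> i j ij_lt eij; have [z z_child] := node_child_exists.
  apply/existsP; exists z.
  by rewrite z_child (root_path_node_child z_child) seq_rel_rcons //; lia.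
have xi : index x spine < (depth v).+1 by rewrite -size_root_path index_mem.
rewrite -cs_end; apply: cs_proper => //; apply/existsP; exists z.
rewrite z_child /seq_rel (root_path_node_child z_child) !nth_rcons size_root_path xi ltnn eqxx.
by rewrite nth_index.
Qed.

Lemma branch_coloring : exists cb : nat -> 'I_3, [/\ cb 0 = ord0,
  branch_end != r -> cb (depth branch_end) = ord_max &
  {in branch &, forall x y, e x y -> cb (index x branch) != cb (index y branch)}].
Proof.
set y := branch_end.
have [||cb [cb0 cb_end cb_proper]] :=
  @noncrossing_3coloring (seq_rel (root_path y)) 0 (depth y)
    ord0 (if y == r then ord0 else ord_max) isT (@noncrossing_root_path y).
- by move=> /esym/eqP; rewrite depth_eq0 => ->.
- by case: ifP => // /eqP yr; rewrite yr depth_root /seq_rel e_irr.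
exists cb; split=> // [yr | ]; first by rewrite cb_end (negbTE yr).
apply: (proper_on_index (uniq_root_path y) _ _ cb_proper); first by rewrite size_root_path.
by move=> i j _.
Qed.

Lemma whip_coloring : exists c : V -> 'I_3,
  proper_coloring e c /\ forall x, tleaf par r x -> c x = ord_max.
Proof.
have [cs [cs0 cs_proper cs_child]] := spine_coloring.
have [cb [cb0 cb_end cb_proper]] := branch_coloring.
pose c x := if x \in spine then cs (index x spine)
  else if x \in branch then cb (index x branch) else ord_max.
have c_spine x : x \in spine -> c x = cs (index x spine) by rewrite /c => ->.
have c_branch x : x \in branch -> c x = cb (index x branch).
  move=> xb; rewrite /c xb; case: ifP => // xs.
  have /eqP -> : x == r by apply: contraLR xs => /(branch_off_spine xb) /andP[].
  by rewrite !index_root_path_root cs0 cb0.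
have c_child z : node_child z -> c z = ord_max.
  move=> z_child; rewrite /c (negbTE (node_child_notin_spine z_child)); case: ifP => // zb.
  have zr : z != r by case/andP: z_child.
  by case/andP: (branch_off_spine zb zr); rewrite z_child.
exists c; split.
  apply: proper_coloring_tle => x y xy exy.
  have [ys | ys] := boolP (y \in spine).
    by rewrite !c_spine ?cs_proper // (mem_root_path_tle xy).
  have [y_child | y_child] := boolP (node_child y).
    have xv : tle par x v.
      case/andP: y_child => _ /eqP <-; apply: (tle_par xy).
      by apply: contraTneq exy => ->; rewrite e_irr.
    have xs : x \in spine by apply/root_pathP.
    by rewrite c_spine // c_child // (cs_child x y xs y_child exy).
  have yb : y \in branch by apply/root_pathP/off_spine_tle_branch_end/andP.
  by rewrite !c_branch ?cb_proper // (mem_root_path_tle xy).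
move=> x x_leaf; have xs := leaf_notin_spine x_leaf.
have [x_child | x_child] := boolP (node_child x); first exact: c_child.
have x_off : off_spine x by apply/andP.
have yx := tleaf_tle x_leaf (off_spine_tle_branch_end x_off).
rewrite c_branch -yx ?self_in_root_path // index_root_path_self cb_end //.
by rewrite yx off_spine_neq_root.
Qed.

End Whip.
End RootedTree.

Theorem proposition4 (V : finType) (e : rel V) (par : V -> V) (r : V) :
  simple_graph e ->
  spanning_tree_of e par r ->
  normal_tree e par ->
  ~ has_secant_edges e par r ->
  whip par r ->
  exists c : V -> 'I_3,
    proper_coloring e c /\
    (forall x y : V, tleaf par r x -> tleaf par r y -> c x = c y).
Proof.
move=> [e_sym e_irr] [tree _] e_normal no_secant [v [v_deg v_unique v_leaves]].
have [c [c_proper c_leaves]] :=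
  whip_coloring tree e_sym e_irr e_normal no_secant v_deg v_unique v_leaves.
by exists c; split=> // x y /c_leaves -> /c_leaves ->.
Qed.
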